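(* For every positive integer $N$ there exists a real symmetric nonnegative matrix $A$ of rank $3$ having exactly one negative eigenvalue (counted with multiplicity) whose nonnegative rank exceeds $N$.
   Context: The nonnegative rank of an $m\times n$ matrix $A$ with nonnegative real entries is the smallest integer $r$ such that $A=UV$ for some $m\times r$ matrix $U$ and $r\times n$ matrix $V$, both with nonnegative real entries. *)

From HB Require Import structures.
From mathcomp Require Import all_boot all_order all_algebra.
From mathcomp Require Import reals.
Set Implicit Arguments. Unset Strict Implicit. Unset Printing Implicit Defensive.
Import Order.TTheory GRing.Theory Num.Theory.
Local Open Scope ring_scope.

Definition nonneg_mx (R : realType) (m n : nat) (A : 'M[R]_(m, n)) : Prop :=
  forall i j, 0 <= A i j.

Definition nonneg_factorization (R : realType) (m n r : nat)
    (A : 'M[R]_(m, n)) : Prop :=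
  exists (U : 'M[R]_(m, r)) (V : 'M[R]_(r, n)),
    nonneg_mx U /\ nonneg_mx V /\ A = U *m V.

Definition eigenvalue_multiset (R : realType) (n : nat) (A : 'M[R]_n)
    (s : seq R) : Prop :=
  char_poly A = \prod_(x <- s) ('X - x%:P).

Definition num_neg_eigenvalues (R : realType) (n : nat) (A : 'M[R]_n)
    (k : nat) : Prop :=
  exists s : seq R, eigenvalue_multiset A s /\ count (fun x => x < 0) s = k.

From HB Require Import structures.
From mathcomp Require Import all_boot all_order all_algebra.
From mathcomp Require Import reals ring lra.
Import Order.TTheory GRing.Theory Num.Theory.
Local Open Scope ring_scope.

(* The matrix A_ij = (x_i + x_j)^2 over the 2m points x = ±1, ..., ±m is
   symmetric, nonnegative and of rank 3, since it equals x_i^2 + 2 x_i x_j + x_j^2.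
   Writing A = B C with B of width 3, A has the eigenvalues of C B together with
   zeros; B can be chosen so that C B is triangular with exactly one negative
   diagonal entry.  In a nonnegative factorization A = U V of inner dimension r,
   the zero set of column j of A is determined by the support of column j of V,
   so A has at most 2^r distinct column zero sets; but column j of A vanishes
   exactly at the point -x_j, so all 2m zero sets are distinct.  Take m = 2^N. *)

(* Compare the determinants of two block factorizations of [[X, B], [C, 1]]. *)
Lemma char_poly_mulmxC (R : comNzRingType) (p q : nat)
    (B : 'M[R]_(p, q)) (C : 'M[R]_(q, p)) :
  'X^q * char_poly (B *m C) = 'X^p * char_poly (C *m B).
Proof.
set Bp := map_mx (@polyC R) B; set Cp := map_mx (@polyC R) C.
pose M := block_mx ('X%:M : 'M_p) Bp Cp (1%:M : 'M_q).
pose L1 := block_mx (1%:M : 'M_p) (- Bp) 0 ('X%:M : 'M_q).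
pose L2 := block_mx (1%:M : 'M_p) 0 (- Cp) ('X%:M : 'M_q).
have L1M : L1 *m M = block_mx (char_poly_mx (B *m C)) 0 ('X *: Cp) 'X%:M.
  rewrite mulmx_block !mul1mx !mul0mx !add0r !mulmx1 mulNmx subrr mul_scalar_mx.
  by rewrite /char_poly_mx map_mxM.
have L2M : L2 *m M = block_mx 'X%:M Bp 0 (char_poly_mx (C *m B)).
  rewrite mulmx_block !mul1mx !mul0mx !addr0 !mulmx1 !mulNmx mul_mx_scalar.
  by rewrite mul_scalar_mx addNr /char_poly_mx map_mxM addrC.
have := congr1 determinant L1M; have := congr1 determinant L2M.
rewrite !det_mulmx det_ublock det_lblock det_lblock det_ublock !det1 !det_scalar.
by rewrite !mul1r /char_poly => <- ->; rewrite mulrC.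
Qed.

Lemma eigenvalue_multiset_mulmx_trig (R : realType) (n p : nat)
    (B : 'M[R]_(n, p)) (C : 'M[R]_(p, n)) :
  (p <= n)%N -> is_trig_mx (C *m B) ->
  eigenvalue_multiset (B *m C) ([seq (C *m B) k k | k : 'I_p] ++ nseq (n - p) 0).
Proof.
move=> le_pn CB_trig; rewrite /eigenvalue_multiset big_cat big_map big_enum /=.
have -> : \prod_(y <- nseq (n - p) 0) ('X - y%:P) = 'X^(n - p) :> {poly R}.
  by elim: (n - p)%N => [|k IH]; rewrite ?big_nil /= ?big_cons ?IH ?subr0 ?exprS.
apply: (mulfI (x := 'X^p)); first by rewrite expf_neq0 // polyX_eq0.
by rewrite -char_poly_mulmxC char_poly_trig // mulrCA -exprD subnKC // mulrC.
Qed.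

Definition col_zeros {R : nzRingType} {m n : nat} (A : 'M[R]_(m, n)) (j : 'I_n) :
  {set 'I_m} := [set i | A i j == 0].

Lemma card_col_zeros_nonneg_factorization (R : realType) (m n r : nat)
    (A : 'M[R]_(m, n)) :
  nonneg_factorization r A -> (#|col_zeros A @: 'I_n| <= 2 ^ r)%N.
Proof.
move=> [U [V [U_ge0 [V_ge0 ->]]]].
pose supp (j : 'I_n) : {set 'I_r} := [set k | V k j != 0].
pose killed (S : {set 'I_r}) : {set 'I_m} := [set i | [forall k in S, U i k == 0]].
have col_zerosE j : col_zeros (U *m V) j = killed (supp j).
  apply/setP => i; rewrite !inE mxE psumr_eq0 => [|k _]; last exact: mulr_ge0.
  apply/allP/forall_inP => [H k | H k _].
    by rewrite inE => Vk; move: (H k (mem_index_enum k)); rewrite mulf_eq0 (negbTE Vk) orbF.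
  rewrite mulf_eq0; have [_|Vk] := eqVneq (V k j) 0; first by rewrite orbT.
  by rewrite orbF H ?inE.
have -> : col_zeros (U *m V) @: 'I_n = killed @: (supp @: 'I_n).
  by rewrite -imset_comp; apply: eq_imset.
apply: leq_trans (leq_imset_card _ _) _.
by apply: leq_trans (max_card _) _; rewrite -cardsT -powersetT card_powerset cardsT card_ord.
Qed.

Lemma mxrank_mxsub (F : fieldType) (m1 m2 n1 n2 : nat)
    (f : 'I_m2 -> 'I_m1) (g : 'I_n2 -> 'I_n1) (A : 'M[F]_(m1, n1)) :
  (\rank (mxsub f g A) <= \rank A)%N.
Proof.
have rank_rowsub p q r (h : 'I_q -> 'I_p) (B : 'M[F]_(p, r)) :
    (\rank (rowsub h B) <= \rank B)%N by apply/mxrankS/rowsub_sub.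
rewrite mxsubrc (leq_trans (rank_rowsub _ _ _ _ _)) //.
by rewrite -mxrank_tr trmx_mxsub -[leqRHS]mxrank_tr rank_rowsub.
Qed.

Section SquaredSumMatrix.
Variables (R : realType) (m : nat).
Hypothesis m_gt1 : (1 < m)%N.
Local Notation n := (m + m)%N.
Local Notation nR := (n%:R : R).

Definition pt (i : 'I_n) : R :=
  match split i with inl k => k.+1%:R | inr k => - k.+1%:R end.

Lemma pt_lshift (k : 'I_m) : pt (lshift m k) = k.+1%:R.
Proof. by rewrite /pt (unsplitK (inl k)). Qed.

Lemma pt_rshift (k : 'I_m) : pt (rshift m k) = - k.+1%:R.
Proof. by rewrite /pt (unsplitK (inr k)). Qed.

Lemma pt_inj : injective pt.
Proof.
move=> i j; rewrite -(splitK i) -(splitK j).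
case: (split i) => [k|k]; case: (split j) => [l|l] /=;
  rewrite ?pt_lshift ?pt_rshift.
- by move/eqP; rewrite eqr_nat eqSS => /eqP/val_inj ->.
- by move=> e; exfalso; have := ltr0Sn R k; have := ltr0Sn R l; lra.
- by move=> e; exfalso; have := ltr0Sn R k; have := ltr0Sn R l; lra.
- by move/oppr_inj/eqP; rewrite eqr_nat eqSS => /eqP/val_inj ->.
Qed.

Lemma pt_opp (j : 'I_n) : exists i, pt i = - pt j.
Proof.
rewrite -(splitK j); case: (split j) => k /=.
  by exists (rshift m k); rewrite pt_lshift pt_rshift.
by exists (lshift m k); rewrite pt_lshift pt_rshift opprK.
Qed.

Lemma sum_pt_odd (g : R -> R) : (forall y, g (- y) = - g y) -> \sum_i g (pt i) = 0.
Proof.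
move=> g_odd; rewrite big_split_ord /=.
under [X in _ + X]eq_bigr do rewrite pt_rshift g_odd.
by under eq_bigr do rewrite pt_lshift; rewrite sumrN subrr.
Qed.

Let k0 : 'I_m := Ordinal (ltnW m_gt1).
Let k1 : 'I_m := Ordinal m_gt1.

Definition Amx : 'M[R]_n := \matrix_(i, j) (pt i + pt j) ^+ 2.

Definition moment4 : R := \sum_i pt i ^+ 4.
Definition beta : R := Num.sqrt (nR * moment4).

(* Amx = Bmx Cmx because (y + z)^2 = 2 y z + ((beta + n y^2)(beta + n z^2)
   - (beta - n y^2)(beta - n z^2)) / (2 n beta).  C B is triangular because the
   points are symmetric (odd sums vanish) and beta^2 = n * moment4 makes
   phi 0 and phi 2 orthogonal over the points. *)
Definition phi (k : 'I_3) (y : R) : R :=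
  match val k with 0 => beta + nR * y ^+ 2 | 1 => y | _ => beta - nR * y ^+ 2 end.
Definition weight (k : 'I_3) : R :=
  match val k with 0 => (2 * nR * beta)^-1 | 1 => 2 | _ => - (2 * nR * beta)^-1 end.

Definition Bmx : 'M[R]_(n, 3) := \matrix_(i, k) phi k (pt i).
Definition Cmx : 'M[R]_(3, n) := \matrix_(k, i) (weight k * phi k (pt i)).

Lemma nR_gt0 : 0 < nR.
Proof. by rewrite ltr0n addn_gt0 (ltnW m_gt1). Qed.

Lemma moment4_gt0 : 0 < moment4.
Proof.
have pt4_ge0 i : 0 <= pt i ^+ 4 by rewrite (_ : 4 = 2 * 2)%N // exprM sqr_ge0.
rewrite lt0r sumr_ge0 ?andbT; last by move=> i _; apply: pt4_ge0.
rewrite psumr_eq0; last by move=> i _; apply: pt4_ge0.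
apply/allP => /(_ (lshift m k0) (mem_index_enum _)).
by rewrite pt_lshift expr1n oner_eq0.
Qed.

Lemma beta_gt0 : 0 < beta.
Proof. by rewrite sqrtr_gt0 mulr_gt0 ?nR_gt0 ?moment4_gt0. Qed.

Lemma beta_sqr : beta ^+ 2 = nR * moment4.
Proof. by rewrite sqr_sqrtr // mulr_ge0 ?ltW ?nR_gt0 ?moment4_gt0. Qed.

Lemma Amx_factor : Amx = Bmx *m Cmx.
Proof.
apply/matrixP => i j; rewrite !mxE !big_ord_recl big_ord0 !mxE /phi /weight /=.
have := nR_gt0; have := beta_gt0; move: nR beta (pt i) (pt j) => a b y z hb ha.
by field; rewrite !gt_eqF.
Qed.

Lemma CBmxE k l : (Cmx *m Bmx) k l = \sum_i weight k * phi k (pt i) * phi l (pt i).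
Proof. by rewrite !mxE; apply: eq_bigr => i _; rewrite !mxE. Qed.

Lemma CBmx_trig : is_trig_mx (Cmx *m Bmx).
Proof.
apply/is_trig_mxP => k l; rewrite CBmxE.
case: k => [[|[|[|?]]] hk] //; case: l => [[|[|[|?]]] hl] // _.
- apply: (sum_pt_odd (fun y => weight _ * phi (Ordinal hk) y * phi (Ordinal hl) y)).
  by move=> y; rewrite /phi /weight /=; ring.
- rewrite (eq_bigr (fun i => weight ord0 * (beta ^+ 2 - nR ^+ 2 * pt i ^+ 4))); last first.
    by move=> i _; rewrite /phi /weight /=; ring.
  by rewrite -mulr_sumr sumrB sumr_const card_ord -mulr_sumr beta_sqr -/moment4 -mulr_natr; ring.
- apply: (sum_pt_odd (fun y => weight _ * phi (Ordinal hk) y * phi (Ordinal hl) y)).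
  by move=> y; rewrite /phi /weight /=; ring.
Qed.

Lemma CBmx_diagE k : (Cmx *m Bmx) k k = weight k * \sum_i phi k (pt i) ^+ 2.
Proof. by rewrite CBmxE mulr_sumr; apply: eq_bigr => i _; rewrite mulrA. Qed.

Lemma inv_2nbeta_gt0 : 0 < (2 * nR * beta)^-1.
Proof. by rewrite invr_gt0 !mulr_gt0 ?nR_gt0 ?beta_gt0. Qed.

Lemma sum_phi2_sqr_gt0 : 0 < \sum_i (beta - nR * pt i ^+ 2) ^+ 2.
Proof.
rewrite lt0r sumr_ge0 ?andbT; last by move=> i _; apply: sqr_ge0.
rewrite psumr_eq0; last by move=> i _; apply: sqr_ge0.
apply/negP => /allP all0.
have := all0 (lshift m k0) (mem_index_enum _); have := all0 (lshift m k1) (mem_index_enum _).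
rewrite !pt_lshift !sqrf_eq0 !subr_eq0 => /eqP e1 /eqP e0.
move: e1; rewrite e0 => /(mulfI (lt0r_neq0 nR_gt0))/eqP.
by rewrite -!natrX eqr_nat /k0 /k1 /= => /eqP.
Qed.

Lemma CBmx_diag_lt0 k : ((Cmx *m Bmx) k k < 0) = (k == ord_max).
Proof.
rewrite -val_eqE /=.
have sumsq_ge0 l : 0 <= \sum_i phi l (pt i) ^+ 2 by rewrite sumr_ge0 // => i _; apply: sqr_ge0.
case: k => [[|[|[|?]]] hk] //; rewrite CBmx_diagE /weight /=.
- by rewrite ltNge mulr_ge0 // ltW // inv_2nbeta_gt0.
- by rewrite ltNge mulr_ge0.
- by rewrite /phi /= mulNr oppr_lt0 mulr_gt0 ?inv_2nbeta_gt0 ?sum_phi2_sqr_gt0.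
Qed.

Lemma num_neg_eigenvalues_Amx : num_neg_eigenvalues Amx 1.
Proof.
have le3n : (3 <= n)%N by apply: (leq_add m_gt1 (ltnW m_gt1)).
eexists; split; first by rewrite Amx_factor; apply: eigenvalue_multiset_mulmx_trig le3n CBmx_trig.
rewrite count_cat count_nseq ltxx mul0n addn0 count_map.
under eq_count do rewrite /= CBmx_diag_lt0.
by rewrite (count_uniq_mem _ (enum_uniq _)) mem_enum.
Qed.

Definition minor_idx (k : 'I_3) : 'I_n :=
  match val k with 0 => lshift m k0 | 1 => rshift m k0 | _ => lshift m k1 end.

Lemma rank_Amx : \rank Amx = 3%N.
Proof.
apply/eqP; rewrite eqn_leq; apply/andP; split.
  by rewrite Amx_factor (leq_trans (mxrankM_maxl _ _)) ?rank_leq_col.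
have minor_unit : mxsub minor_idx minor_idx Amx \in unitmx.
  rewrite unitmxE unitfE (expand_det_row _ ord0) !big_ord_recl big_ord0 /cofactor.
  rewrite !(expand_det_row _ ord0) !big_ord_recl !big_ord0 /cofactor !det_mx11.
  rewrite !mxE /= /minor_idx /= !pt_lshift !pt_rshift /bump /= /k0 /k1 /=.
  by apply/eqP; lra.
by rewrite -(mxrank_unit minor_unit) mxrank_mxsub.
Qed.

Lemma col_zeros_Amx_inj : injective (col_zeros Amx).
Proof.
move=> j1 j2 /setP/(_ _) eq_zeros; have [i pt_i] := pt_opp j1.
have := eq_zeros i; rewrite !inE !mxE pt_i addNr expr0n eqxx sqrf_eq0 addrC subr_eq0.
by move=> /esym/eqP/pt_inj ->.
Qed.

End SquaredSumMatrix.

Theorem mainTheorem1 (R : realType) (N : nat) (hN : (0 < N)%N) :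
  exists (n : nat) (A : 'M[R]_n),
    A^T = A /\ nonneg_mx A /\ \rank A = 3%N /\
    num_neg_eigenvalues A 1 /\
    (forall r : nat, (r <= N)%N -> ~ nonneg_factorization r A).
Proof.
have m_gt1 : (1 < 2 ^ N)%N by rewrite -{1}(expn0 2) ltn_exp2l.
exists (2 ^ N + 2 ^ N)%N, (Amx R (2 ^ N)).
split; first by apply/matrixP => i j; rewrite !mxE addrC.
split; first by move=> i j; rewrite mxE sqr_ge0.
split; first exact: rank_Amx.
split; first exact: num_neg_eigenvalues_Amx.
move=> r le_rN /card_col_zeros_nonneg_factorization.
rewrite card_imset; last exact: col_zeros_Amx_inj.
rewrite card_ord leqNgt => /negP; apply.
by rewrite addnn -mul2n -expnS ltn_exp2l // ltnS.
Qed.
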